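(* Let $d\ge 3$ and let $\mathbf X=(X_1,\dots,X_d)$ be a random vector of real-valued random variables on an atomless probability space (no integrability assumed), at least $3$ of whose components are non-degenerate. If a counter-monotonic version $\mathbf X^{\rm ct}$ of $\mathbf X$ exists, then $\mathbf X^{\rm ct}\le_{\rm sm}\mathbf X$.
   Context: A function $\varphi:\mathbb R^d\to\mathbb R$ is supermodular if $\varphi(\mathbf x)+\varphi(\mathbf y)\le\varphi(\mathbf x\wedge\mathbf y)+\varphi(\mathbf x\vee\mathbf y)$ for all $\mathbf x,\mathbf y\in\mathbb R^d$, where $\wedge,\vee$ are componentwise minimum and maximum. An expectation $\mathbb E[V]$ is well-defined if $\mathbb E[\max\{V,0\}]<\infty$ or $\mathbb E[\max\{-V,0\}]<\infty$. For random vectors $\mathbf X,\mathbf Y$ in $\mathbb R^d$, $\mathbf X\le_{\rm sm}\mathbf Y$ means $\mathbb E[\varphi(\mathbf X)]\le\mathbb E[\varphi(\mathbf Y)]$ for all supermodular $\varphi$ such that both expectations are well-defined. A pair $(X,Y)$ is comonotonic if $X=f(Z)$, $Y=g(Z)$ a.s. for some random variable $Z$ and increasing $f,g$, and counter-monotonic if $(X,-Y)$ is comonotonic; a random vector is counter-monotonic if each pair of its components is. A counter-monotonic version of $\mathbf X$ is a counter-monotonic random vector with the same marginal distributions as $\mathbf X$. *)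

From HB Require Import structures.
From mathcomp Require Import all_boot all_order all_algebra.
From mathcomp Require Import all_classical all_reals all_analysis.
Set Implicit Arguments. Unset Strict Implicit. Unset Printing Implicit Defensive.
Import Order.TTheory GRing.Theory Num.Theory.
Local Open Scope classical_set_scope.
Local Open Scope ring_scope.

Section defs.
Context {d : measure_display} {T : measurableType d} {R : realType}.
Variable P : probability T R.

Definition atomless : Prop :=
  forall A : set T, measurable A -> (0 < P A)%E ->
    exists B : set T, [/\ measurable B, B `<=` A, (0 < P B)%E & (P B < P A)%E].

Definition nondegenerate_rv (X : T -> R) : Prop :=
  ~ exists c : R, P [set w | X w = c] = 1%E.

Definition comonotonic (X Y : T -> R) : Prop :=
  exists Z : T -> R, measurable_fun setT Z /\
  exists f g : R -> R,
    [/\ {homo f : x y / x <= y}, {homo g : x y / x <= y},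
        {ae P, forall w, X w = f (Z w)} & {ae P, forall w, Y w = g (Z w)}].

Definition countermonotonic_pair (X Y : T -> R) : Prop :=
  comonotonic X (fun w => - Y w).

Definition countermonotonic (n : nat) (X : 'I_n -> T -> R) : Prop :=
  forall i j : 'I_n, i != j -> countermonotonic_pair (X i) (X j).

Definition same_marginals (n : nat) (X Y : 'I_n -> T -> R) : Prop :=
  forall (i : 'I_n) (B : set R), measurable B ->
    P (X i @^-1` B) = P (Y i @^-1` B).

Definition expectation_welldef (V : T -> R) : Prop :=
  (\int[P]_w (Num.max (V w) 0)%:E < +oo)%E \/
  (\int[P]_w (Num.max (- V w) 0)%:E < +oo)%E.

End defs.

Definition rvec {T : Type} {R : Type} (n : nat) (X : 'I_n -> T -> R) (w : T)
  : n.-tuple R := [tuple X i w | i < n].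

Definition tmin {R : realType} (n : nat) (x y : n.-tuple R) : n.-tuple R :=
  [tuple Num.min (tnth x i) (tnth y i) | i < n].
Definition tmax {R : realType} (n : nat) (x y : n.-tuple R) : n.-tuple R :=
  [tuple Num.max (tnth x i) (tnth y i) | i < n].

Definition supermodular {R : realType} (n : nat) (phi : n.-tuple R -> R) : Prop :=
  forall x y : n.-tuple R, phi x + phi y <= phi (tmin x y) + phi (tmax x y).

Definition sm_le {d : measure_display} {T : measurableType d} {R : realType}
  (P : probability T R) (n : nat) (X Y : 'I_n -> T -> R) : Prop :=
  forall phi : n.-tuple R -> R,
    measurable_fun setT phi -> supermodular phi ->
    expectation_welldef P (phi \o rvec X) ->
    expectation_welldef P (phi \o rvec Y) ->
    (\int[P]_w (phi (rvec X w))%:E <= \int[P]_w (phi (rvec Y w))%:E)%E.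

From HB Require Import structures.
From mathcomp Require Import all_boot all_order all_algebra.
From mathcomp Require Import all_classical all_reals all_analysis.
From mathcomp Require Import measurable_realfun ess_sup_inf.
From mathcomp Require Import lra.
Import Order.TTheory GRing.Theory Num.Theory.
Local Open Scope classical_set_scope.
Local Open Scope ring_scope.

(* Let phi be supermodular and m a point of R^n.  Telescoping the supermodular
   inequality along the coordinates gives, for x >= m or x <= m componentwise,
     phi x >= phi m + \sum_i (phi (m with x_i at i) - phi m),
   with equality when x differs from m in at most one coordinate.  The right-hand
   side is a sum of functions of single coordinates, so its expectation only depends
   on the marginals.  Hence E phi(Y) <= E phi(X) as soon as Y a.s. deviates from m in
   at most one coordinate while X, with the same marginals, is a.s. >= m or <= m.
   A counter-monotonic Y with three non-degenerate components has this form: any two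
   upper tail events of different components are a.s. disjoint or a.s. cover the whole
   space, and thresholds splitting the three non-degenerate components force the same
   alternative for all pairs.  In the disjoint case all upper tails with non-null
   complements are pairwise a.s. disjoint, so at most one component exceeds its
   essential infimum; the covering case is the same statement for -Y.  The bound
   Y >= m (resp. Y <= m) then passes to X through the marginals. *)

Definition tupdate {U : Type} {n : nat} (x : n.-tuple U) (i : 'I_n) (a : U) :
  n.-tuple U := [tuple if j == i then a else tnth x j | j < n].

Lemma tnth_tupdate {U : Type} {n : nat} (x : n.-tuple U) i a j :
  tnth (tupdate x i a) j = if j == i then a else tnth x j.
Proof. exact: tnth_mktuple. Qed.

Lemma tupdate_tnth {U : Type} {n : nat} (x : n.-tuple U) i : tupdate x i (tnth x i) = x.
Proof. by apply: eq_from_tnth => j; rewrite tnth_tupdate; case: eqP => [->|]. Qed.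

Section supermodular_increments.
Context {R : realType} {n : nat}.
Variables (phi : n.-tuple R -> R) (m : n.-tuple R).

Definition increment (i : 'I_n) (a : R) : R := phi (tupdate m i a) - phi m.

Lemma increment_id i : increment i (tnth m i) = 0.
Proof. by rewrite /increment tupdate_tnth subrr. Qed.

Definition tprefix (x : n.-tuple R) (k : nat) : n.-tuple R :=
  [tuple if (j < k)%N then tnth x j else tnth m j | j < n].

Lemma supermodular_le_minmax {a b u v : n.-tuple R} : supermodular phi ->
  (tmin a b = u /\ tmax a b = v) \/ (tmin a b = v /\ tmax a b = u) ->
  phi a + phi b <= phi u + phi v.
Proof. by move=> sm [[<- <-]|[<- <-]]; [|rewrite [leRHS]addrC]; apply: sm. Qed.

Lemma tprefix_minmax {x : n.-tuple R} {k : nat} (lt_kn : (k < n)%N) :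
  let a := tprefix x k in let b := tupdate m (Ordinal lt_kn) (tnth x (Ordinal lt_kn)) in
  (forall j, tnth m j <= tnth x j) \/ (forall j, tnth x j <= tnth m j) ->
  (tmin a b = m /\ tmax a b = tprefix x k.+1) \/
  (tmin a b = tprefix x k.+1 /\ tmax a b = m).
Proof.
move=> a b cmp.
have split_k (j : 'I_n) : (j < k.+1)%N = (j < k)%N || (j == Ordinal lt_kn).
  by rewrite ltnS leq_eqVlt orbC.
case: cmp => cmp; [left|right]; split; apply: eq_from_tnth => j;
  rewrite !tnth_mktuple ?split_k; have := cmp j;
  case: eqVneq => [->|_]; rewrite ?ltnn //=; case: (ltnP j k) => _ /=;
  rewrite ?minxx ?maxxx //.
all: by case: leP => ? ?; lra.
Qed.

Lemma supermodular_increments_le (x : n.-tuple R) : supermodular phi ->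
  (forall j, tnth m j <= tnth x j) \/ (forall j, tnth x j <= tnth m j) ->
  phi m + \sum_(i < n) increment i (tnth x i) <= phi x.
Proof.
move=> sm cmp.
suff prefix_le k : (k <= n)%N ->
    phi m + \sum_(i < n | (i < k)%N) increment i (tnth x i) <= phi (tprefix x k).
  have := prefix_le n (leqnn n); under eq_bigl do rewrite ltn_ord.
  suff -> : tprefix x n = x by [].
  by apply: eq_from_tnth => j; rewrite tnth_mktuple ltn_ord.
elim: k => [_|k IHk lt_kn].
  rewrite big_pred0 // addr0; suff -> : tprefix x 0 = m by [].
  by apply: eq_from_tnth => j; rewrite tnth_mktuple.
rewrite (bigD1 (Ordinal lt_kn)) //=.
rewrite (eq_bigl (fun i : 'I_n => (i < k)%N)); last first.
  move=> i; rewrite ltnS leq_eqVlt -val_eqE /=.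
  by case: ltngtP.
have := IHk (ltnW lt_kn).
have := supermodular_le_minmax sm (tprefix_minmax lt_kn cmp).
rewrite /increment; lra.
Qed.

Lemma sum_increments_single_deviation (F : R -> R) (x : n.-tuple R) : F 0 = 0 ->
  (forall i j, i != j -> tnth x i = tnth m i \/ tnth x j = tnth m j) ->
  \sum_(i < n) F (increment i (tnth x i)) = F (phi x - phi m).
Proof.
move=> F0 dev.
have [[i0 xi0]|] := pselect (exists i0, tnth x i0 != tnth m i0).
  have x_other j : j != i0 -> tnth x j = tnth m j.
    by move=> ji0; case: (dev j i0 ji0) => // e; move: xi0; rewrite e eqxx.
  rewrite (bigD1 i0) //= big1 ?addr0 => [|j ji0]; last by rewrite x_other // increment_id.
  suff {2}-> : x = tupdate m i0 (tnth x i0) by [].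
  by apply: eq_from_tnth => j; rewrite tnth_tupdate; case: eqVneq => [->|/x_other].
move=> /forallNP x_eq_m.
have -> : x = m by apply: eq_from_tnth => j; apply/eqP/negbNE/negP/x_eq_m.
by rewrite subrr big1 // => i _; rewrite increment_id.
Qed.

End supermodular_increments.

Section real_integral.
Context {d : measure_display} {T : measurableType d} {R : realType}.
Variable mu : {measure set T -> \bar R}.
Implicit Types f g : T -> R.

Lemma integralEposneg f :
  (\int[mu]_w (f w)%:E = \int[mu]_w (f^\+ w)%:E - \int[mu]_w (f^\- w)%:E)%E.
Proof. by rewrite (integralE _ _ (EFin \o f)) funerpos funerneg. Qed.

Lemma ae_le_integral f g : measurable_fun setT f -> measurable_fun setT g ->
  {ae mu, forall w, f w <= g w} -> (\int[mu]_w (f w)%:E <= \int[mu]_w (g w)%:E)%E.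
Proof.
move=> mf mg fg; rewrite integralEposneg [leRHS]integralEposneg.
apply: leeB; apply: ae_ge0_le_integral => //;
  do ?[move=> w _; rewrite lee_fin ?funrpos_ge0 ?funrneg_ge0 //];
  do ?[apply/measurable_EFinP; exact/measurable_funrpos];
  do ?[apply/measurable_EFinP; exact/measurable_funrneg].
all: by apply: filterS fg => w fgw _; rewrite lee_fin le_max2 // lerN2.
Qed.

Lemma ge0_integralB {f g} : measurable_fun setT f -> measurable_fun setT g ->
  (forall w, 0 <= f w) -> (forall w, 0 <= g w) -> (\int[mu]_w (g w)%:E < +oo)%E ->
  (\int[mu]_w (f w - g w)%:E = \int[mu]_w (f w)%:E - \int[mu]_w (g w)%:E)%E.
Proof.
move=> mf mg f0 g0 g_fin; set h := fun w => f w - g w.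
have mh : measurable_fun setT h by exact: measurable_funB.
have me (k : T -> R) : measurable_fun setT k -> measurable_fun setT (EFin \o k).
  by move=> mk; apply/measurable_EFinP.
have balance : (\int[mu]_w (h^\+ w)%:E + \int[mu]_w (g w)%:E =
                \int[mu]_w (h^\- w)%:E + \int[mu]_w (f w)%:E)%E.
  rewrite -!ge0_integralD //; do ?[by move=> w _; rewrite lee_fin ?funrpos_ge0 ?funrneg_ge0];
    do ?[exact/me/measurable_funrpos]; do ?[exact/me/measurable_funrneg]; do ?exact: me.
  apply: eq_integral => w _; rewrite -!EFinD /h /funrpos /funrneg.
  by congr (_%:E); case: leP => ?; case: leP => ?; lra.
have hneg_le : (\int[mu]_w (h^\- w)%:E <= \int[mu]_w (g w)%:E)%E.
  apply: ge0_le_integral => //; do ?[by move=> w _; rewrite lee_fin ?funrneg_ge0];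
    do ?[exact/me/measurable_funrneg]; do ?exact: me.
  move=> w _; rewrite lee_fin /funrneg /h ge_max g0 andbT opprB lerBlDr lerDl.
  exact: f0.
have g_fin_num : (\int[mu]_w (g w)%:E)%E \is a fin_num.
  by rewrite ge0_fin_numE // integral_ge0 // => w _; rewrite lee_fin.
have hneg_fin_num : (\int[mu]_w (h^\- w)%:E)%E \is a fin_num.
  rewrite ge0_fin_numE ?(le_lt_trans hneg_le) //.
  by apply: integral_ge0 => w _; rewrite lee_fin funrneg_ge0.
rewrite (integralEposneg h).
have -> : (\int[mu]_w (h^\+ w)%:E =
           \int[mu]_w (h^\- w)%:E + \int[mu]_w (f w)%:E - \int[mu]_w (g w)%:E)%E.
  by rewrite -balance addeK.
by rewrite addeAC; congr (_ - _)%E; rewrite addeAC subee // add0e.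
Qed.

Lemma ge0_integral_comp_same_law (U V : T -> R) (h : R -> R) :
  measurable_fun setT U -> measurable_fun setT V -> measurable_fun setT h ->
  (forall x, 0 <= h x) ->
  (forall B, measurable B -> mu (U @^-1` B) = mu (V @^-1` B)) ->
  (\int[mu]_w (h (U w))%:E = \int[mu]_w (h (V w))%:E)%E.
Proof.
move=> mU mV mh h0 UV.
have mhE : measurable_fun setT (EFin \o h) by apply/measurable_EFinP.
have pushE Z : measurable_fun setT Z ->
    (\int[pushforward mu Z]_x (h x)%:E = \int[mu]_w (h (Z w))%:E)%E.
  by move=> mZ; rewrite ge0_integral_pushforward // => x _; rewrite lee_fin.
rewrite -pushE // -pushE //; apply: eq_measure_integral => B mB _.
exact: UV.
Qed.

Lemma ge0_integral_cstD_sum (I : finType) (a : R) (F : I -> T -> R) : 0 <= a ->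
  (forall i, measurable_fun setT (F i)) -> (forall i w, 0 <= F i w) ->
  (\int[mu]_w (a + \sum_i F i w)%:E = a%:E * mu setT + \sum_i \int[mu]_w (F i w)%:E)%E.
Proof.
move=> a0 mF F0.
have mFE i : measurable_fun setT (EFin \o F i) by apply/measurable_EFinP.
under eq_integral do rewrite EFinD -sumEFin.
rewrite ge0_integralD //; do ?[by move=> w _; rewrite lee_fin
  | by move=> w _; rewrite sume_ge0 // => i _; rewrite lee_fin
  | by apply: emeasurable_sum => i; exact: mFE].
rewrite integral_cst // ge0_integral_sum //.
by move=> i w _; rewrite lee_fin.
Qed.

Lemma ge0_integral_cstD_sum_same_marginals (I : finType) (a : R) (h : I -> R -> R)
    (X Y : I -> T -> R) : 0 <= a ->
  (forall i, measurable_fun setT (h i)) -> (forall i x, 0 <= h i x) ->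
  (forall i, measurable_fun setT (X i)) -> (forall i, measurable_fun setT (Y i)) ->
  (forall i B, measurable B -> mu (X i @^-1` B) = mu (Y i @^-1` B)) ->
  (\int[mu]_w (a + \sum_i h i (X i w))%:E = \int[mu]_w (a + \sum_i h i (Y i w))%:E)%E.
Proof.
move=> a0 mh h0 mX mY XY.
rewrite !ge0_integral_cstD_sum //; do ?by move=> i; apply: measurableT_comp.
by congr (_ + _)%E; apply: eq_bigr => i _; exact: ge0_integral_comp_same_law (XY i).
Qed.

End real_integral.

Lemma maxr0_subr {R : realDomainType} (r : R) : Num.max r 0 - Num.max (- r) 0 = r.
Proof. by case: leP => ?; case: leP => ?; lra. Qed.

Lemma tnth_rvec {T R : Type} {n : nat} (X : 'I_n -> T -> R) w i :
  tnth (rvec X w) i = X i w.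
Proof. exact: tnth_mktuple. Qed.

Lemma measurable_rvec {d : measure_display} {T : measurableType d} {R : realType}
    {n : nat} (X : 'I_n -> T -> R) :
  (forall i, measurable_fun setT (X i)) -> measurable_fun setT (rvec X).
Proof.
move=> mX; apply/measurable_fun_tnthP => i.
by rewrite (_ : _ \o _ = X i) //; apply: funext => w /=; rewrite tnth_rvec.
Qed.

Section single_deviation.
Context {d : measure_display} {T : measurableType d} {R : realType}.
Variables (P : probability T R) (n : nat) (phi : n.-tuple R -> R) (m : 'I_n -> R).
Variables (X Y : 'I_n -> T -> R).
Hypotheses (mphi : measurable_fun setT phi) (smphi : supermodular phi).
Hypotheses (mX : forall i, measurable_fun setT (X i))
  (mY : forall i, measurable_fun setT (Y i)).
Hypothesis XY : forall i B, measurable B -> P (X i @^-1` B) = P (Y i @^-1` B).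
Hypothesis Ydev :
  {ae P, forall w, forall i j, i != j -> Y i w = m i \/ Y j w = m j}.
Hypothesis Xcmp :
  {ae P, forall w, (forall i, m i <= X i w) \/ (forall i, X i w <= m i)}.

Let mt := [tuple m i | i < n].
Let c := phi mt.
Let G := increment phi mt.

(* Nonnegative sums of functions of single coordinates: their integrals only depend
   on the marginals of [Z]. *)
Let Apos (Z : 'I_n -> T -> R) w := Num.max c 0 + \sum_i (G i)^\+ (Z i w).
Let Aneg (Z : 'I_n -> T -> R) w := Num.max (- c) 0 + \sum_i (G i)^\- (Z i w).

Let mG i : measurable_fun setT (G i).
Proof.
apply: measurable_funB; last exact: measurable_cst.
apply: measurableT_comp mphi _; apply/measurable_fun_tnthP => j.
rewrite (_ : _ \o _ = if j == i then id else cst (tnth mt j)).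
  by case: eqP => _; [exact: measurable_id | exact: measurable_cst].
by apply: funext => t /=; rewrite tnth_tupdate; case: eqP.
Qed.

Let mApos Z : (forall i, measurable_fun setT (Z i)) -> measurable_fun setT (Apos Z).
Proof.
move=> mZ; apply: measurable_funD; first exact: measurable_cst.
apply: measurable_sum => i; apply: measurableT_comp (mZ i).
exact: measurable_funrpos (mG i).
Qed.

Let mAneg Z : (forall i, measurable_fun setT (Z i)) -> measurable_fun setT (Aneg Z).
Proof.
move=> mZ; apply: measurable_funD; first exact: measurable_cst.
apply: measurable_sum => i; apply: measurableT_comp (mZ i).
exact: measurable_funrneg (mG i).
Qed.

Let Apos_ge0 Z w : 0 <= Apos Z w.
Proof. by rewrite addr_ge0 ?le_max ?lexx ?orbT ?sumr_ge0 // => i _; exact: funrpos_ge0. Qed.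

Let Aneg_ge0 Z w : 0 <= Aneg Z w.
Proof. by rewrite addr_ge0 ?le_max ?lexx ?orbT ?sumr_ge0 // => i _; exact: funrneg_ge0. Qed.

Let AposBneg Z w : Apos Z w - Aneg Z w = c + \sum_i G i (Z i w).
Proof.
rewrite opprD addrACA -sumrB maxr0_subr; congr (_ + _).
by apply: eq_bigr => i _; exact: maxr0_subr.
Qed.

Let mphi_rvec (Z : 'I_n -> T -> R) :
  (forall i, measurable_fun setT (Z i)) -> measurable_fun setT (phi \o rvec Z).
Proof. by move=> mZ; apply: measurableT_comp => //; exact: measurable_rvec. Qed.

Let Ydev_tuple : {ae P, forall w, forall i j, i != j ->
  tnth (rvec Y w) i = tnth mt i \/ tnth (rvec Y w) j = tnth mt j}.
Proof.
by apply: filterS Ydev => w dev i j ij; rewrite !tnth_rvec !tnth_mktuple; exact: dev.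
Qed.

Let ae_phiY : {ae P, forall w, phi (rvec Y w) = Apos Y w - Aneg Y w}.
Proof.
apply: filterS Ydev_tuple => w dev; rewrite AposBneg.
rewrite (eq_bigr (fun i => G i (tnth (rvec Y w) i))) => [|i _]; last by rewrite tnth_rvec.
by rewrite (sum_increments_single_deviation phi mt id) // addrC subrK.
Qed.

Let ae_AnegY : {ae P, forall w,
  Aneg Y w <= Num.max (- c) 0 + Num.max c 0 + (phi \o rvec Y)^\- w}.
Proof.
apply: filterS Ydev_tuple => w dev; rewrite -addrA lerD2l.
rewrite (eq_bigr (fun i => Num.max (- G i (tnth (rvec Y w) i)) 0)) => [|i _]; last first.
  by rewrite tnth_rvec.
rewrite (sum_increments_single_deviation phi mt (fun r => Num.max (- r) 0)) ?oppr0 ?maxxx //.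
rewrite /funrneg /= -/c; move: (phi (rvec Y w)) => y.
by case: (leP c 0) => ?; case: (leP (- y) 0) => ?; case: (leP (- (y - c)) 0) => ?; lra.
Qed.

Let ae_phiX : {ae P, forall w, Apos X w - Aneg X w <= phi (rvec X w)}.
Proof.
apply: filterS Xcmp => w cmp; rewrite AposBneg.
under eq_bigr => i _ do rewrite -(tnth_rvec X w i).
by apply: supermodular_increments_le => //; case: cmp => ?; [left|right] => j;
  rewrite tnth_rvec tnth_mktuple.
Qed.

Let integral_Apos : (\int[P]_w (Apos X w)%:E = \int[P]_w (Apos Y w)%:E)%E.
Proof.
apply: (ge0_integral_cstD_sum_same_marginals P _ _ (fun i => (G i)^\+)) => //.
- by rewrite le_max lexx orbT.
- by move=> i; exact: measurable_funrpos (mG i).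
Qed.

Let integral_Aneg : (\int[P]_w (Aneg X w)%:E = \int[P]_w (Aneg Y w)%:E)%E.
Proof.
apply: (ge0_integral_cstD_sum_same_marginals P _ _ (fun i => (G i)^\-)) => //.
- by rewrite le_max lexx orbT.
- by move=> i; exact: measurable_funrneg (mG i).
Qed.

Let phiY_neg := (\int[P]_w ((phi \o rvec Y)^\- w)%:E)%E.

Let integral_AnegY_lty : (phiY_neg < +oo)%E -> (\int[P]_w (Aneg Y w)%:E < +oo)%E.
Proof.
rewrite /phiY_neg => phiY_neg_lty; set k := Num.max (- c) 0 + Num.max c 0.
have k0 : 0 <= k by rewrite addr_ge0 // le_max lexx orbT.
apply: (le_lt_trans (y := \int[P]_w (k + (phi \o rvec Y)^\- w)%:E)%E).
  apply: ae_ge0_le_integral => //.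
  - by move=> w _; rewrite lee_fin Aneg_ge0.
  - exact/measurable_EFinP/mAneg.
  - by move=> w _; rewrite lee_fin addr_ge0 ?funrneg_ge0.
  - apply/measurable_EFinP/measurable_funD; first exact: measurable_cst.
    exact/measurable_funrneg/mphi_rvec.
  - by apply: filterS ae_AnegY => w AnegY _; rewrite lee_fin.
have PT : (P : {measure set T -> \bar R}) setT = 1%E by exact: probability_setT.
under eq_integral do rewrite EFinD.
rewrite ge0_integralD //; do ?[by move=> w _; rewrite lee_fin ?funrneg_ge0];
  do ?[exact/measurable_EFinP/measurable_funrneg/mphi_rvec]; do ?exact: measurable_cst.
by rewrite integral_cst // PT mule1 lte_add_pinfty // ltry.
Qed.

Let integral_phiY : (phiY_neg < +oo)%E ->
  (\int[P]_w (phi (rvec Y w))%:E = \int[P]_w (Apos X w - Aneg X w)%:E)%E.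
Proof.
move=> /integral_AnegY_lty AnegY_lty.
transitivity (\int[P]_w (Apos Y w - Aneg Y w)%:E)%E.
  apply: ae_eq_integral => //.
  - exact/measurable_EFinP/mphi_rvec.
  - by apply/measurable_EFinP; exact: measurable_funB (mApos Y mY) (mAneg Y mY).
  - by apply: filterS ae_phiY => w -> _.
have AnegX_lty : (\int[P]_w (Aneg X w)%:E < +oo)%E by rewrite integral_Aneg.
rewrite (ge0_integralB P (mApos Y mY) (mAneg Y mY) (Apos_ge0 Y) (Aneg_ge0 Y) AnegY_lty).
rewrite (ge0_integralB P (mApos X mX) (mAneg X mX) (Apos_ge0 X) (Aneg_ge0 X) AnegX_lty).
by congr (_ - _)%E; [exact/esym/integral_Apos | exact/esym/integral_Aneg].
Qed.

Lemma supermodular_integral_le_single_deviation :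
  (\int[P]_w (phi (rvec Y w))%:E <= \int[P]_w (phi (rvec X w))%:E)%E.
Proof.
have [/integral_phiY ->|] := boolP (phiY_neg < +oo)%E; last first.
  (* an integral with infinite negative part is -oo, whatever its positive part *)
  rewrite -leNgt leye_eq => /eqP phiY_neg_y.
  by rewrite (integralEposneg _ (phi \o rvec Y)) -/phiY_neg phiY_neg_y addeNy leNye.
apply: ae_le_integral ae_phiX; last exact: mphi_rvec.
exact: measurable_funB (mApos X mX) (mAneg X mX).
Qed.

End single_deviation.

Section ae_disjoint_or_cover.
Context {d : measure_display} {T : measurableType d} {R : realType}.
Variable P : probability T R.
Implicit Types A B C : set T.

(* the indicators of [A] and [B] are counter-monotonic *)
Definition ae_disjoint_or_cover A B :=
  P.-negligible (A `&` B) \/ P.-negligible (~` A `&` ~` B).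

Lemma negligible_triangle {A B C} : ae_disjoint_or_cover B C ->
  P.-negligible (A `&` B) -> P.-negligible (~` A `&` ~` C) ->
  P.-negligible B \/ P.-negligible (~` C).
Proof.
move=> [BC|BC'] AB AC'.
  left; apply: negligibleS (negligibleU (negligibleU AB AC') BC) => w Bw.
  have [Aw|nAw] := pselect (A w); first by left; left.
  by have [Cw|nCw] := pselect (C w); [right|left; right].
right; apply: negligibleS (negligibleU (negligibleU AB AC') BC') => w nCw.
have [Aw|nAw] := pselect (A w); last by left; right.
by have [Bw|nBw] := pselect (B w); [left; left|right].
Qed.

Lemma ae_disjoint_spread {A B C} : P.-negligible (A `&` B) ->
  ae_disjoint_or_cover A C -> ae_disjoint_or_cover B C ->
  ~ P.-negligible B -> ~ P.-negligible (~` C) -> P.-negligible (A `&` C).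
Proof.
move=> AB [//|AC'] BC B_pos C'_pos.
by case: (negligible_triangle BC AB AC').
Qed.

End ae_disjoint_or_cover.

Section negligible_thresholds.
Context {d : measure_display} {T : measurableType d} {R : realType}.
Variable P : probability T R.
Implicit Types (E : set T) (Z : T -> R).

Lemma negligible_ae_not {A : set T} :
  P.-negligible A -> {ae P, forall w, ~ A w}.
Proof. by apply: negligibleS => w /=; exact: contrapT. Qed.

Lemma not_negligible_setT : ~ P.-negligible [set: T].
Proof.
move/(negligibleP _ measurableT) => PT0.
suff : (1%E = 0%E :> \bar R) by move/eqP; rewrite onee_eq0.
by rewrite -[RHS]PT0; exact/esym/probability_setT.
Qed.

Lemma negligible_unbounded E Z :
  (forall t, P.-negligible (E `&` [set w | t < Z w])) -> P.-negligible E.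
Proof.
move=> null_gt; apply: negligibleS (negligible_bigcup (fun n => null_gt (- n%:R))).
move=> w Ew; exists (Num.trunc (- Z w)).+1 => //; split => //=.
by rewrite ltrNl truncnS_gt.
Qed.

Lemma negligible_gt_lim E Z c :
  (forall t, c < t -> P.-negligible (E `&` [set w | t < Z w])) ->
  P.-negligible (E `&` [set w | c < Z w]).
Proof.
move=> null_gt.
have null_n n : P.-negligible (E `&` [set w | c + n.+1%:R^-1 < Z w]).
  by apply: null_gt; rewrite ltrDl invr_gt0.
apply: negligibleS (negligible_bigcup null_n) => w [Ew /ltr_add_invr[n cnZ]].
by exists n.
Qed.

Lemma ess_inf_ge_of_negligible Z t :
  P.-negligible [set w | Z w < t] -> (t%:E <= ess_inf P (EFin \o Z))%E.
Proof.
move=> null_lt; apply/ess_infP; apply: negligibleS null_lt => w /=.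
by rewrite lee_fin ltNge => /negP.
Qed.

Lemma ess_inf_lty Z : (ess_inf P (EFin \o Z) < +oo)%E.
Proof.
rewrite ltey; apply/eqP => /ess_inf_eqyP infty; apply: not_negligible_setT.
by apply: negligibleS infty.
Qed.

Lemma not_negligible_lt_of_ess_inf_lt Z t :
  (ess_inf P (EFin \o Z) < t%:E)%E -> ~ P.-negligible [set w | Z w < t].
Proof. by move=> inf_lt /ess_inf_ge_of_negligible; rewrite leNgt inf_lt. Qed.

Lemma not_negligible_le_of_ess_inf_lt Z t :
  (ess_inf P (EFin \o Z) < t%:E)%E -> ~ P.-negligible (~` [set w | t < Z w]).
Proof.
move=> /not_negligible_lt_of_ess_inf_lt lt_pos /(negligibleS _) le_null.
by apply/lt_pos/le_null => w /= /[swap] /ltW; rewrite leNgt => /negP.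
Qed.

Lemma ae_probability1 (A : set T) :
  measurable A -> P.-negligible (~` A) -> P A = 1%E.
Proof.
move=> mA /(negligibleP _ (measurableC mA)) A'0.
by move: (probability_setC P (measurableC mA)); rewrite setCK A'0 sube0.
Qed.

Lemma nondegenerate_threshold {Z} : measurable_fun setT Z -> nondegenerate_rv P Z ->
  exists t, ~ P.-negligible [set w | Z w < t] /\ ~ P.-negligible [set w | t < Z w].
Proof.
move=> mZ nondeg; apply: contrapT => no_t.
have null_gt t : (ess_inf P (EFin \o Z) < t%:E)%E -> P.-negligible [set w | t < Z w].
  move=> inf_lt; apply: contrapT => gt_pos; apply: no_t; exists t; split => //.
  exact: not_negligible_lt_of_ess_inf_lt.
have := ess_inf_lty Z; case inf_eq: (ess_inf P (EFin \o Z)) => [c|//|] _; last first.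
  apply: not_negligible_setT; apply: negligible_unbounded => t.
  by rewrite setTI; apply: null_gt; rewrite inf_eq ltNyr.
have null_lt : P.-negligible [set w | Z w < c].
  apply: negligibleS (ess_inf_le P (EFin \o Z)) => w /= wc.
  by rewrite inf_eq lee_fin leNgt wc.
have null_gt_c : P.-negligible [set w | c < Z w].
  rewrite -[X in P.-negligible X]setTI; apply: negligible_gt_lim => t ct.
  by rewrite setTI; apply: null_gt; rewrite inf_eq lte_fin.
apply: nondeg; exists c; apply: ae_probability1.
  by have := mZ measurableT [set c] (measurable_set1 c); rewrite setTI.
apply: negligibleS (negligibleU null_lt null_gt_c) => w /= /eqP.
by rewrite neq_lt => /orP.
Qed.

Lemma nondegenerate_thresholds {I : finType} {Y : I -> T -> R} {W : {set I}} :
  (forall x, measurable_fun setT (Y x)) -> (forall x, x \in W -> nondegenerate_rv P (Y x)) ->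
  exists t : I -> R, forall x, x \in W ->
    ~ P.-negligible [set w | Y x w < t x] /\ ~ P.-negligible [set w | t x < Y x w].
Proof.
move=> mY nd; suff /choice [t tP] : forall x, exists s : R, x \in W ->
    ~ P.-negligible [set w | Y x w < s] /\ ~ P.-negligible [set w | s < Y x w].
  by exists t.
move=> x; have [xW|xW] := boolP (x \in W); last by exists 0.
by have [s ?] := nondegenerate_threshold (mY x) (nd x xW); exists s.
Qed.

End negligible_thresholds.

Section countermonotonic_events.
Context {d : measure_display} {T : measurableType d} {R : realType}.
Variable P : probability T R.

Lemma countermonotonic_pair_ae_disjoint_or_cover {U V : T -> R} a b :
  countermonotonic_pair P U V ->
  ae_disjoint_or_cover P [set w | a < U w] [set w | b < V w].
Proof.
move=> [Z [_ [f [g [f_up g_up Uf Vg]]]]].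
have [[z [afz gzb]]|no_z] := pselect (exists z, a < f z /\ g z < - b).
  right; apply: negligibleS (negligibleU Uf Vg) => w /= [/negP + /negP].
  rewrite -!leNgt => Ua Vb; have [eU|] := pselect (U w = f (Z w)); last by left.
  right => eV; have [zZ|Zz] := leP z (Z w).
    by have := f_up _ _ zZ; rewrite -eU; lra.
  by have := g_up _ _ (ltW Zz); rewrite -eV; lra.
left; apply: negligibleS (negligibleU Uf Vg) => w /= [aU bV].
have [eU|] := pselect (U w = f (Z w)); last by left.
right => eV; apply: no_z; exists (Z w).
by rewrite -eU -eV ltrN2.
Qed.

Lemma comonotonicN {U V : T -> R} :
  comonotonic P U V -> comonotonic P (fun w => - U w) (fun w => - V w).
Proof.
move=> [Z [mZ [f [g [f_up g_up Uf Vg]]]]]; exists (fun w => - Z w).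
split; first exact: measurable_funN.
exists (fun z => - f (- z)), (fun z => - g (- z)); split.
- by move=> x y xy; rewrite lerN2 f_up // lerN2.
- by move=> x y xy; rewrite lerN2 g_up // lerN2.
- by apply: filterS Uf => w ->; rewrite opprK.
- by apply: filterS Vg => w ->; rewrite opprK.
Qed.

Lemma countermonotonicN {n} {Y : 'I_n -> T -> R} :
  countermonotonic P Y -> countermonotonic P (fun i w => - Y i w).
Proof. by move=> cm i j ij; exact: comonotonicN (cm i j ij). Qed.

End countermonotonic_events.

Lemma exists_avoid2 {I : finType} {W : {set I}} : (2 < #|W|)%N ->
  forall l l', exists2 x, x \in W & (x != l) && (x != l').
Proof.
move=> W3 l l'; have : (0 < #|W :\ l :\ l'|)%N.
  move: W3; rewrite (cardsD1 l) (cardsD1 l' (W :\ l)) lt0n.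
  by apply: contraTneq => ->; case: (_ \in _); case: (_ \in _).
by case/card_gt0P => x; rewrite !in_setD1 => /and3P [xl' xl xW]; exists x; rewrite ?xl ?xl'.
Qed.

Section ae_disjoint_or_cover_family.
Context {d : measure_display} {T : measurableType d} {R : realType}.
Variable P : probability T R.
Context {I : finType}.
Variables (W : {set I}) (E : I -> set T).
Hypothesis E_nontrivial :
  forall x, x \in W -> ~ P.-negligible (E x) /\ ~ P.-negligible (~` E x).
Hypothesis E_dc : forall x y, x \in W -> y \in W -> x != y ->
  ae_disjoint_or_cover P (E x) (E y).

Lemma ae_disjoint_or_cover_uniform :
  (forall x y, x \in W -> y \in W -> x != y -> P.-negligible (E x `&` E y)) \/
  (forall x y, x \in W -> y \in W -> x != y -> P.-negligible (~` E x `&` ~` E y)).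
Proof.
have [all_cover|] := pselect (forall x y, x \in W -> y \in W -> x != y ->
  P.-negligible (~` E x `&` ~` E y)); first by right.
move=> /existsNP [p] /existsNP [q] /not_implyP [pW] /not_implyP [qW] /not_implyP [pq pq'].
have Epq : P.-negligible (E p `&` E q) by case: (E_dc p q pW qW pq).
left; have from_p z : z \in W -> z != p -> P.-negligible (E p `&` E z).
  move=> zW zp; have [-> //|zq] := eqVneq z q.
  have pz : p != z by rewrite eq_sym.
  have qz : q != z by rewrite eq_sym.
  apply: (ae_disjoint_spread P Epq (E_dc p z pW zW pz) (E_dc q z qW zW qz)).
    exact: proj1 (E_nontrivial q qW).
  exact: proj2 (E_nontrivial z zW).
move=> x y xW yW xy; have [xp|xp] := eqVneq x p.
  by rewrite xp; apply: from_p; rewrite // -xp eq_sym.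
have Exp : P.-negligible (E x `&` E p) by rewrite setIC; exact: from_p.
have [-> //|yp] := eqVneq y p.
have py : p != y by rewrite eq_sym.
apply: (ae_disjoint_spread P Exp (E_dc x y xW yW xy) (E_dc p y pW yW py)).
  exact: proj1 (E_nontrivial p pW).
exact: proj2 (E_nontrivial y yW).
Qed.

End ae_disjoint_or_cover_family.

Section disjoint_upper_tails.
Context {d : measure_display} {T : measurableType d} {R : realType}.
Variable P : probability T R.
Context {I : finType}.
Variable Y : I -> T -> R.
Local Notation tail i a := [set w | a < Y i w].
Hypothesis Y_dc : forall i j, i != j -> forall a b,
  ae_disjoint_or_cover P (tail i a) (tail j b).
Variables (W : {set I}) (t : I -> R).
Hypothesis W3 : (2 < #|W|)%N.
Hypothesis t_nontrivial : forall x, x \in W ->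
  ~ P.-negligible (tail x (t x)) /\ ~ P.-negligible (~` tail x (t x)).
Hypothesis W_disj : forall x y, x \in W -> y \in W -> x != y ->
  P.-negligible (tail x (t x) `&` tail y (t y)).

Lemma tails_ae_disjoint l l' a b : l != l' ->
  ~ P.-negligible (~` tail l a) -> ~ P.-negligible (~` tail l' b) ->
  P.-negligible (tail l a `&` tail l' b).
Proof.
move=> ll' la l'b.
have W_l x : x \in W -> x != l -> P.-negligible (tail x (t x) `&` tail l a).
  move=> xW xl; have [y yW /andP [yx yl]] := exists_avoid2 W3 x l.
  have xy : x != y by rewrite eq_sym.
  apply: (ae_disjoint_spread P (W_disj x y xW yW xy) (Y_dc x l xl _ _)
    (Y_dc y l yl _ _)) => //.
  exact: proj1 (t_nontrivial y yW).
have [x xW /andP [xl xl']] := exists_avoid2 W3 l l'.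
have lx : P.-negligible (tail l a `&` tail x (t x)) by rewrite setIC; exact: W_l.
apply: (ae_disjoint_spread P lx (Y_dc l l' ll' _ _) (Y_dc x l' xl' _ _)) => //.
exact: proj1 (t_nontrivial x xW).
Qed.

Let m l := fine (ess_inf P (EFin \o Y l)).

Let ess_inf_fin_num l : ess_inf P (EFin \o Y l) \is a fin_num.
Proof.
rewrite fin_numE (lt_eqF (ess_inf_lty P (Y l))) andbT.
apply/eqP => inf_Ny; have [x xW /andP [xl _]] := exists_avoid2 W3 l l.
apply: (proj1 (t_nontrivial x xW)); apply: (negligible_unbounded P _ (Y l)) => a.
rewrite setIC; apply: tails_ae_disjoint; first by rewrite eq_sym.
  by apply: not_negligible_le_of_ess_inf_lt; rewrite inf_Ny ltNyr.
exact: proj2 (t_nontrivial x xW).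
Qed.

Let ae_ge_m l : {ae P, forall w, m l <= Y l w}.
Proof.
apply: filterS (ess_inf_le P (EFin \o Y l)) => w.
by rewrite -[X in (X <= _)%E](fineK (ess_inf_fin_num l)) lee_fin.
Qed.

Let tailC_pos l e : m l < e -> ~ P.-negligible (~` tail l e).
Proof.
move=> me; apply: not_negligible_le_of_ess_inf_lt.
by rewrite -(fineK (ess_inf_fin_num l)) lte_fin.
Qed.

Let tails_m_negligible l l' : l != l' -> P.-negligible (tail l (m l) `&` tail l' (m l')).
Proof.
move=> ll'; apply: negligible_gt_lim => b l'b; rewrite setIC.
apply: negligible_gt_lim => a la; rewrite setIC.
by apply: tails_ae_disjoint => //; exact: tailC_pos.
Qed.

Lemma disjoint_upper_tails_single_deviation : exists m : I -> R,
  {ae P, forall w, forall l l', l != l' -> Y l w = m l \/ Y l' w = m l'} /\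
  (forall l, {ae P, forall w, m l <= Y l w}).
Proof.
exists m; split; last exact: ae_ge_m.
have ge_all : {ae P, forall w, forall l, m l <= Y l w}.
  by apply: filter_forall; exact: ae_ge_m.
have not_both : {ae P, forall w, forall l l', l != l' -> ~ (m l < Y l w /\ m l' < Y l' w)}.
  apply: filter_forall => l; apply: filter_forall => l'.
  have [<-|ll'] := eqVneq l l'; first exact: aeW.
  by apply: filterS (negligible_ae_not P (tails_m_negligible l l' ll')) => w not_both _.
apply: filterS2 ge_all not_both => w ge nb l l' ll'.
have [|lt_l] := eqVneq (Y l w) (m l); first by left.
have [|lt_l'] := eqVneq (Y l' w) (m l'); first by right.
by exfalso; apply: (nb l l' ll'); rewrite !lt_neqAle ![m _ == _]eq_sym lt_l lt_l' !ge.
Qed.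

End disjoint_upper_tails.

Section countermonotonic_structure.
Context {d : measure_display} {T : measurableType d} {R : realType}.
Variable P : probability T R.
Variables (n : nat) (Y : 'I_n -> T -> R).
Hypothesis cm : countermonotonic P Y.
Variables (W : {set 'I_n}) (t : 'I_n -> R).
Hypothesis W3 : (2 < #|W|)%N.
Hypothesis t_split : forall x, x \in W ->
  ~ P.-negligible [set w | Y x w < t x] /\ ~ P.-negligible [set w | t x < Y x w].

Let lt_subset_compl (Z : T -> R) a : [set w | Z w < a] `<=` ~` [set w | a < Z w].
Proof. by move=> w /= /[swap] /ltW; rewrite leNgt => /negP. Qed.

Let Y_dc l l' : l != l' -> forall a b,
  ae_disjoint_or_cover P [set w | a < Y l w] [set w | b < Y l' w].
Proof. by move=> ll' a b; apply: countermonotonic_pair_ae_disjoint_or_cover; exact: cm. Qed.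

Let t_nontrivial x : x \in W -> ~ P.-negligible [set w | t x < Y x w] /\
  ~ P.-negligible (~` [set w | t x < Y x w]).
Proof.
move=> xW; have [lt_pos gt_pos] := t_split x xW.
by split => // /(negligibleS (lt_subset_compl _ _)).
Qed.

Let Yn l w := - Y l w.

Let Yn_dc l l' : l != l' -> forall a b,
  ae_disjoint_or_cover P [set w | a < Yn l w] [set w | b < Yn l' w].
Proof.
move=> ll' a b.
by apply: countermonotonic_pair_ae_disjoint_or_cover; exact: countermonotonicN.
Qed.

Let tn_nontrivial x : x \in W -> ~ P.-negligible [set w | - t x < Yn x w] /\
  ~ P.-negligible (~` [set w | - t x < Yn x w]).
Proof.
move=> xW; have [lt_pos gt_pos] := t_split x xW; split => /(negligibleS _) null.
  by apply/lt_pos/null => w /=; rewrite /Yn ltrN2.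
by apply/gt_pos/null => w /= ?; apply: lt_subset_compl; rewrite /Yn /= ltrN2.
Qed.

Let lower_tails_single_deviation :
  (forall x y, x \in W -> y \in W -> x != y ->
    P.-negligible (~` [set w | t x < Y x w] `&` ~` [set w | t y < Y y w])) ->
  exists m : 'I_n -> R,
    {ae P, forall w, forall l l', l != l' -> Y l w = m l \/ Y l' w = m l'} /\
    (forall l, {ae P, forall w, Y l w <= m l}).
Proof.
move=> cover.
have tn_disj x y : x \in W -> y \in W -> x != y ->
    P.-negligible ([set w | - t x < Yn x w] `&` [set w | - t y < Yn y w]).
  move=> xW yW xy; apply: negligibleS (cover x y xW yW xy) => w /=.
  by rewrite /Yn !ltrN2 => -[? ?]; split; apply: lt_subset_compl.
have [m [dev ge]] := disjoint_upper_tails_single_deviation P Yn Yn_dc W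
  (fun x => - t x) W3 tn_nontrivial tn_disj.
exists (fun l => - m l); split.
  apply: filterS dev => w dev l l' ll'.
  by case: (dev l l' ll') => <-; [left|right]; rewrite opprK.
by move=> l; apply: filterS (ge l) => w; rewrite lerNr.
Qed.

Lemma countermonotonic_single_deviation_of_split : exists m : 'I_n -> R,
  {ae P, forall w, forall l l', l != l' -> Y l w = m l \/ Y l' w = m l'} /\
  ((forall l, {ae P, forall w, m l <= Y l w}) \/ (forall l, {ae P, forall w, Y l w <= m l})).
Proof.
have [disj|cover] := ae_disjoint_or_cover_uniform P W
    (fun x => [set w | t x < Y x w]) t_nontrivial (fun x y _ _ xy => Y_dc x y xy _ _).
  have [m [dev ge]] := disjoint_upper_tails_single_deviation P Y Y_dc W t W3 t_nontrivial disj.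
  by exists m; split => //; left.
by have [m [dev le]] := lower_tails_single_deviation cover; exists m; split => //; right.
Qed.

End countermonotonic_structure.

Lemma countermonotonic_single_deviation {d : measure_display} {T : measurableType d}
    {R : realType} (P : probability T R) {n} {Y : 'I_n -> T -> R} {i j k : 'I_n} :
  (forall l, measurable_fun setT (Y l)) -> countermonotonic P Y ->
  i != j -> j != k -> i != k ->
  nondegenerate_rv P (Y i) -> nondegenerate_rv P (Y j) -> nondegenerate_rv P (Y k) ->
  exists m : 'I_n -> R,
    {ae P, forall w, forall l l', l != l' -> Y l w = m l \/ Y l' w = m l'} /\
    ((forall l, {ae P, forall w, m l <= Y l w}) \/
     (forall l, {ae P, forall w, Y l w <= m l})).
Proof.
move=> mY cm ij jk ik ndi ndj ndk.
have W3 : (2 < #|[set i; j; k]%SET|)%N.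
  by rewrite finset.setUC cardsU1 cards2 !inE ![k == _]eq_sym (negbTE ik) (negbTE jk) ij.
have nd x : x \in [set i; j; k]%SET -> nondegenerate_rv P (Y x).
  by rewrite !inE => /orP [/orP [] |] /eqP ->.
have [t t_split] := nondegenerate_thresholds P mY nd.
exact: (countermonotonic_single_deviation_of_split P _ _ cm _ _ W3 t_split).
Qed.

Section same_law.
Context {d : measure_display} {T : measurableType d} {R : realType}.
Variable P : probability T R.
Context {U V : T -> R}.
Hypotheses (mU : measurable_fun setT U) (mV : measurable_fun setT V).
Hypothesis UV : forall B, measurable B -> P (U @^-1` B) = P (V @^-1` B).

Lemma ae_preimage_same_law {B : set R} : measurable B ->
  {ae P, forall w, B (U w)} -> {ae P, forall w, B (V w)}.
Proof.
move=> mB; have mpre (Z : T -> R) : measurable_fun setT Z -> measurable (Z @^-1` ~` B).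
  by move=> mZ; rewrite -[X in measurable X]setTI; apply: mZ => //; exact: measurableC.
move=> /(negligibleP _ (mpre U mU)) UB0; apply/(negligibleP _ (mpre V mV)).
transitivity (P (U @^-1` ~` B)); last exact: UB0.
by apply/esym/UV; exact: measurableC.
Qed.

Lemma nondegenerate_rv_same_law :
  nondegenerate_rv P V -> nondegenerate_rv P U.
Proof.
move=> ndV [c Uc]; apply: ndV; exists c.
by rewrite -[X in P X]/(V @^-1` [set c]) -UV //; exact: measurable_set1.
Qed.

End same_law.

Section same_marginals.
Context {d : measure_display} {T : measurableType d} {R : realType}.
Variable P : probability T R.

Lemma ae_cmp_same_marginals {n} (X Y : 'I_n -> T -> R) (m : 'I_n -> R) :
  (forall i, measurable_fun setT (X i)) -> (forall i, measurable_fun setT (Y i)) ->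
  (forall i B, measurable B -> P (Y i @^-1` B) = P (X i @^-1` B)) ->
  (forall i, {ae P, forall w, m i <= Y i w}) \/ (forall i, {ae P, forall w, Y i w <= m i}) ->
  {ae P, forall w, (forall i, m i <= X i w) \/ (forall i, X i w <= m i)}.
Proof.
move=> mX mY YX [ge|le].
  suff : {ae P, forall w, forall i, m i <= X i w} by apply: filterS => w; left.
  apply: filter_forall => i; move: (ge i).
  have ae_itv Z : {ae P, forall w, m i <= Z w} <-> {ae P, forall w, `[m i, +oo[%classic (Z w)}.
    by split; apply: filterS => w /=; rewrite in_itv /= andbT.
  move/ae_itv/(ae_preimage_same_law P (mY i) (mX i) (YX i) (measurable_itv _)).
  by move/ae_itv.
suff : {ae P, forall w, forall i, X i w <= m i} by apply: filterS => w; right.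
apply: filter_forall => i; move: (le i).
have ae_itv Z : {ae P, forall w, Z w <= m i} <-> {ae P, forall w, `]-oo, m i]%classic (Z w)}.
  by split; apply: filterS => w /=; rewrite in_itv.
move/ae_itv/(ae_preimage_same_law P (mY i) (mX i) (YX i) (measurable_itv _)).
by move/ae_itv.
Qed.

End same_marginals.

Theorem theorem7 (dT : measure_display) (T : measurableType dT) (R : realType)
  (P : probability T R) (d : nat) (X Xct : 'I_d -> {RV P >-> R}) :
  (3 <= d)%N ->
  atomless P ->
  (exists i j k : 'I_d, [/\ i != j, j != k, i != k &
     [/\ nondegenerate_rv P (X i), nondegenerate_rv P (X j) & nondegenerate_rv P (X k)]]) ->
  countermonotonic P (fun i => (Xct i : T -> R)) ->
  same_marginals P (fun i => (Xct i : T -> R)) (fun i => (X i : T -> R)) ->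
  sm_le P (fun i => (Xct i : T -> R)) (fun i => (X i : T -> R)).
Proof.
move=> _ _ [i [j [k [ij jk ik [ndi ndj ndk]]]]] cm same phi mphi smphi _ _.
have mX l : measurable_fun setT (X l) by exact: measurable_funPT.
have mXct l : measurable_fun setT (Xct l) by exact: measurable_funPT.
have nd l : nondegenerate_rv P (X l) -> nondegenerate_rv P (Xct l).
  by apply: nondegenerate_rv_same_law; exact: same.
have [m [dev cmp]] := countermonotonic_single_deviation P mXct cm ij jk ik
  (nd i ndi) (nd j ndj) (nd k ndk).
apply: (supermodular_integral_le_single_deviation _ _ _ m) => //.
  by move=> l B mB; rewrite same.
exact: ae_cmp_same_marginals mX mXct same cmp.
Qed.
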